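(* Let $D$ be a delta-matroid on $[n,\overline{n}]$ with feasible sets $\mathcal{F}$, let $S\in\operatorname{AdS}_n$ with $|S|=n$, and let $r=\max_{B\in\mathcal{F}}|S\cap B|$. Let $M$ be the matroid on $S$ whose set of bases is $\{S\cap B:B\in\mathcal{F},\ |S\cap B|=r\}$. Then for every $T\subseteq S$, $$\operatorname{rk}_M(T)=\frac{g_D(T)+|T|}{2}.$$
   Context: Let $[n,\overline{n}]=\{1,\dots,n,\overline{1},\dots,\overline{n}\}$ with involution $a\mapsto\overline{a}$; $\overline{S}=\{\overline{a}:a\in S\}$. A subset is admissible if it contains at most one of $i,\overline{i}$ for each $i$; $\operatorname{AdS}_n$ is the set of admissible subsets. In $\mathbb{R}^n$ set $e_{\overline{i}}=-e_i$, $e_S=\sum_{a\in S}e_a$. A delta-matroid $D$ on $[n,\overline{n}]$ is a nonempty collection $\mathcal{F}$ of admissible sets of size $n$ (feasible sets) such that $\operatorname{Conv}\{e_B:B\in\mathcal{F}\}$ has all edges parallel to some $e_i$ or $e_i\pm e_j$. Its rank function is $g_D(S)=\max_{B\in\mathcal{F}}(|S\cap B|-|\overline{S}\cap B|)$. (It is a known fact that the collection $\{S\cap B:B\in\mathcal{F},|S\cap B|=r\}$ is the set of bases of a matroid on $S$.) $\operatorname{rk}_M$ denotes the matroid rank function. *)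

From HB Require Import structures.
From mathcomp Require Import all_boot all_order all_algebra.
Set Implicit Arguments. Unset Strict Implicit. Unset Printing Implicit Defensive.
Import Order.TTheory GRing.Theory Num.Theory.
Local Open Scope ring_scope.

(* Ground set [n, nbar]: (i, false) encodes i, (i, true) encodes ibar. *)
Definition elt (n : nat) := ('I_n * bool)%type.
Definition bar {n : nat} (a : elt n) : elt n := (a.1, ~~ a.2).
Definition barset {n : nat} (S : {set elt n}) : {set elt n} := [set bar a | a in S].

Definition admissible {n : nat} (S : {set elt n}) : bool :=
  [forall i : 'I_n, ~~ (((i, false) \in S) && ((i, true) \in S))].

Definition e_elt {R : numDomainType} {n : nat} (a : elt n) : 'I_n -> R :=
  fun j => if j == a.1 then (if a.2 then -1 else 1) else 0.
Definition e_set {R : numDomainType} {n : nat} (S : {set elt n}) : 'I_n -> R :=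
  fun j => \sum_(a in S) e_elt a j.

Definition dotv {R : numDomainType} {n : nat} (w x : 'I_n -> R) : R :=
  \sum_(j < n) w j * x j.

Definition unitv {R : numDomainType} {n : nat} (i : 'I_n) : 'I_n -> R :=
  fun j => if j == i then 1 else 0.

Definition good_direction {R : numDomainType} {n : nat} (d : 'I_n -> R) : Prop :=
  exists2 c : R, c != 0 &
    ((exists i : 'I_n, forall j, d j = c * unitv i j) \/
     (exists i k : 'I_n, i != k /\
        ((forall j, d j = c * (unitv i j + unitv k j)) \/
         (forall j, d j = c * (unitv i j - unitv k j))))).

(* [e_B1, e_B2] is an edge of Conv{e_B : B in F}: some linear functional w is
   maximized over the vertex set exactly at e_B1 and e_B2 (all e_B are
   vertices, being distinct points of {-1,1}^n). *)
Definition is_edge {R : numDomainType} {n : nat} (F : {set {set elt n}})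
    (B1 B2 : {set elt n}) : Prop :=
  [/\ B1 \in F, B2 \in F, B1 != B2 &
    exists w : 'I_n -> R,
      [/\ dotv w (e_set B1) = dotv w (e_set B2),
          forall B, B \in F -> dotv w (e_set B) <= dotv w (e_set B1) &
          forall B, B \in F -> dotv w (e_set B) = dotv w (e_set B1) ->
            B = B1 \/ B = B2]].

Definition delta_matroid {R : numDomainType} {n : nat} (F : {set {set elt n}}) : Prop :=
  [/\ F != set0,
      forall B, B \in F -> admissible B /\ #|B| = n &
      forall B1 B2, @is_edge R n F B1 B2 ->
        good_direction (fun j => e_set B1 j - e_set B2 j : R)].

(* Rank function g_D(S) = max_{B in F} (|S cap B| - |Sbar cap B|).
   The neutral element -n is a lower bound of all terms (|B| = n for feasible
   B), so for nonempty F this is the true maximum. *)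
Definition gD {n : nat} (F : {set {set elt n}}) (S : {set elt n}) : int :=
  \big[Num.max/ - (n%:Z)]_(B in F) ((#|S :&: B|)%:Z - (#|barset S :&: B|)%:Z).

Definition rS {n : nat} (F : {set {set elt n}}) (S : {set elt n}) : nat :=
  \max_(B in F) #|S :&: B|.

Definition basesM {n : nat} (F : {set {set elt n}}) (S : {set elt n})
    : {set {set elt n}} :=
  [set S :&: B | B in F & #|S :&: B| == rS F S].

Definition rkM {n : nat} (F : {set {set elt n}}) (S T : {set elt n}) : nat :=
  \max_(X in basesM F S) #|T :&: X|.

(* Pick a feasible B maximizing |T :&: B| and, among those, |S :&: B|.  If
   S :&: B were not a basis of M, some vertex of Conv{e_B} would have a larger
   <e_S, .>, hence (by the simplex argument: all e_B lie on a sphere, so each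
   is the unique maximizer of <e_B, .>) some edge [e_B, e_u] would increase
   <e_S, .>.  Edges are parallel to e_i or e_i +- e_j and e_S has entries +-1,
   so <e_T, .> cannot decrease along it, contradicting the choice of B.  Thus
   one basis achieves max |T :&: B|, which is then rk_M(T), while
   g_D(T) = 2 max |T :&: B| - |T| because |Tbar :&: B| = |T| - |T :&: B|. *)

From HB Require Import structures.
From mathcomp Require Import all_boot all_order all_algebra.
From mathcomp Require Import zify ring lra.
Set Implicit Arguments. Unset Strict Implicit. Unset Printing Implicit Defensive.
Import Order.TTheory GRing.Theory Num.Theory.
Local Open Scope ring_scope.

Section AdmissibleSets.
Variable n : nat.
Implicit Types (T B : {set elt n}).

Lemma admissible_false_true B i :
  admissible B -> (i, false) \in B -> (i, true) \notin B.
Proof. by move=> /forallP /(_ i); rewrite negb_and => /orP[/negP|]. Qed.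

Lemma admissible_full_true B i : admissible B -> #|B| = n ->
  ((i, true) \in B) = ((i, false) \notin B).
Proof.
move=> admB cardB; have fst_inj : {in B &, injective (@fst 'I_n bool)}.
  move=> [j b] [j' b'] jbB jb'B /= ejj'; subst j'; congr pair.
  case: b b' jbB jb'B => -[] // jbB jb'B.
    by have := admissible_false_true admB jb'B; rewrite jbB.
  by have := admissible_false_true admB jbB; rewrite jb'B.
have : i \in [set a.1 | a in B].
  suff -> : [set a.1 | a in B] = [set: 'I_n] by rewrite inE.
  by apply/eqP; rewrite eqEcard subsetT cardsT card_ord card_in_imset // cardB leqnn.
case/imsetP => -[j [] ] jbB /= ->.
  by rewrite jbB; apply/esym/negP => /(admissible_false_true admB); rewrite jbB.
by rewrite jbB (negbTE (admissible_false_true admB jbB)).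
Qed.

Lemma barK : involutive (@bar n).
Proof. by case=> i b; rewrite /bar negbK. Qed.

Lemma mem_barset T a : (a \in barset T) = (bar a \in T).
Proof.
apply/imsetP/idP => [[b bT ->]|baT]; first by rewrite barK.
by exists (bar a); rewrite ?barK.
Qed.

Lemma admissible_full_bar B a : admissible B -> #|B| = n ->
  (bar a \in B) = (a \notin B).
Proof.
move=> admB cardB; case: a => i [] /=; rewrite /bar /=.
  by rewrite (admissible_full_true i admB cardB) negbK.
by rewrite (admissible_full_true i admB cardB).
Qed.

Lemma card_barsetI T B : admissible B -> #|B| = n ->
  #|barset T :&: B| = (#|T| - #|T :&: B|)%N.
Proof.
move=> admB cardB; have -> : barset T :&: B = barset (T :\: B).
  apply/setP => a; rewrite inE !mem_barset !inE (admissible_full_bar _ admB cardB).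
  by rewrite negbK andbC.
by rewrite card_imset ?cardsD //; apply: (can_inj barK).
Qed.

End AdmissibleSets.

Section Vectors.
Variables (R : realFieldType) (n : nat).
Implicit Types (S T X B : {set elt n}) (w x y : 'I_n -> R).

Lemma e_setE X j :
  @e_set R n X j = ((j, false) \in X)%:R - ((j, true) \in X)%:R.
Proof.
rewrite /e_set big_mkcond /=.
transitivity (\sum_i \sum_b (if (i, b) \in X then @e_elt R n (i, b) j else 0)).
  by rewrite pair_bigA; apply: eq_bigr => -[].
rewrite (bigD1 j) //= [s in _ + s]big1 ?addr0 => [|i ij].
  by rewrite big_bool /e_elt /= eqxx; case: (_ \in X); case: (_ \in X) => /=; ring.
by apply: big1 => b _; rewrite /e_elt /= eq_sym (negbTE ij); case: ifP.
Qed.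

Lemma e_set_full B j : admissible B -> #|B| = n ->
  @e_set R n B j = if (j, false) \in B then 1 else -1.
Proof.
move=> admB cardB; rewrite e_setE (admissible_full_true j admB cardB).
by case: ifP; rewrite /= ?subr0 ?sub0r.
Qed.

Lemma e_set_subset S T j : admissible S -> T \subset S ->
  @e_set R n T j = 0 \/ @e_set R n T j = @e_set R n S j.
Proof.
move=> admS /subsetP TS; rewrite !e_setE.
have notboth b : (j, b) \in S -> (j, ~~ b) \notin S.
  by case: b => jbS; [apply/negP => /(admissible_false_true admS); rewrite jbS
                     | exact: admissible_false_true].
case jfT: ((j, false) \in T).
  by right; rewrite (TS _ jfT) (negbTE (notboth _ (TS _ jfT)))
                    (contraNF (@TS _) (notboth _ (TS _ jfT))).
case jtT: ((j, true) \in T); last by left; rewrite subrr.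
by right; rewrite (TS _ jtT) (negbTE (notboth _ (TS _ jtT))).
Qed.

Lemma dotvC w x : dotv w x = dotv x w.
Proof. by apply: eq_bigr => j _; rewrite mulrC. Qed.

Lemma dotvDl w1 w2 x : dotv (fun j => w1 j + w2 j) x = dotv w1 x + dotv w2 x.
Proof. by rewrite /dotv -big_split; apply: eq_bigr => j _; rewrite mulrDl. Qed.

Lemma dotvZl a w x : dotv (fun j => a * w j) x = a * dotv w x.
Proof. by rewrite /dotv mulr_sumr; apply: eq_bigr => j _; rewrite mulrA. Qed.

Lemma dotvDr w x y : dotv w (fun j => x j + y j) = dotv w x + dotv w y.
Proof. by rewrite dotvC dotvDl !(dotvC w). Qed.

Lemma dotvZr a w x : dotv w (fun j => a * x j) = a * dotv w x.
Proof. by rewrite dotvC dotvZl dotvC. Qed.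

Lemma dotvBr w x y : dotv w (fun j => x j - y j) = dotv w x - dotv w y.
Proof. by rewrite /dotv -sumrB; apply: eq_bigr => j _; rewrite mulrBr. Qed.

Lemma dotv_unitv w i : dotv w (unitv i) = w i.
Proof.
rewrite /dotv (bigD1 i) //= big1 => [|j ji]; last by rewrite /unitv (negbTE ji) mulr0.
by rewrite /unitv eqxx mulr1 addr0.
Qed.

Lemma dotv_e_elt w a : dotv (@e_elt R n a) w = (if a.2 then -1 else 1) * w a.1.
Proof.
rewrite /dotv (bigD1 a.1) //= big1 => [|j ja]; last by rewrite /e_elt (negbTE ja) mul0r.
by rewrite /e_elt eqxx addr0.
Qed.

Lemma dotv_e_set_full X B : admissible B -> #|B| = n ->
  dotv (@e_set R n X) (e_set B) = 2 * #|X :&: B|%:R - #|X|%:R.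
Proof.
move=> admB cardB.
have e_elt_B a : dotv (@e_elt R n a) (e_set B) = if a \in B then 1 else -1.
  rewrite dotv_e_elt e_set_full //; case: a => i [] /=; last by rewrite mul1r.
  rewrite (admissible_full_true i admB cardB).
  by case: (_ \in B); rewrite /= ?mulrNN mulr1.
rewrite {1}/dotv; under eq_bigr do rewrite /e_set mulr_suml.
rewrite exchange_big /= (eq_bigr _ (fun a _ => e_elt_B a)) (big_setID B) /=.
rewrite (eq_bigr (fun _ => 1)) => [|a]; last by rewrite inE => /andP[_ ->].
rewrite [s in _ + s](eq_bigr (fun _ => -1)) => [|a]; last first.
  by rewrite !inE => /andP[/negbTE -> _].
rewrite !sumr_const cardsD mulNrn natrB ?subset_leq_card ?subsetIl //.
ring.
Qed.

Lemma good_direction_sign w x d : good_direction d ->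
  (forall j, w j = 1 \/ w j = -1) -> (forall j, x j = 0 \/ x j = w j) ->
  dotv w d < 0 -> dotv x d <= 0.
Proof.
move=> [c _ dE] wE xE.
have dotv_d y e : (forall j, d j = e j) -> dotv y d = dotv y e.
  by move=> de; apply: eq_bigr => j _; rewrite de.
case: dE => [[i /dotv_d dE]|[i [k [_ [/dotv_d dE|/dotv_d dE]]]]];
  rewrite !dE ?dotvZr ?dotvBr ?dotvDr !dotv_unitv.
- by case: (xE i) => ->; lra.
all: by case: (xE i) => ->; case: (xE k) => ->;
       case: (wE i) => ->; case: (wE k) => ->; lra.
Qed.

End Vectors.

Lemma exists_lex_weight (R : realFieldType) (T : finType) (A : {pred T})
    (f g : T -> R) v :
  exists K : R, forall x, x \in A -> f x < f v -> K * f x + g x < K * f v + g v.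
Proof.
pose K := \big[Order.max/0]_(x in A) ((g x - g v + 1) / (f v - f x)).
exists K => x xA fxv.
have : (g x - g v + 1) / (f v - f x) <= K by exact: le_bigmax_cond.
by rewrite ler_pdivrMr ?subr_gt0 // mulrBr; lra.
Qed.

Section Edges.
Variables (R : realFieldType) (n : nat) (F : {set {set elt n}}).
Hypothesis F_full : forall B, B \in F -> admissible B /\ #|B| = n.
Local Notation val w B := (dotv w (@e_set R n B)).

Lemma val_e_set_self v : v \in F -> val (e_set v) v = n%:R.
Proof.
by move=> /F_full[admv cardv]; rewrite dotv_e_set_full // setIid cardv; ring.
Qed.

Lemma val_e_set_lt v B : v \in F -> B \in F -> B != v -> val (e_set v) B < n%:R.
Proof.
move=> vF /F_full[admB cardB] Bv; have [_ cardv] := F_full vF.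
rewrite dotv_e_set_full // cardv.
suff : (#|v :&: B| < #|v|)%N by rewrite cardv -(ltr_nat R); lra.
apply: proper_card; rewrite properE subsetIl /= subsetI subxx /=.
by move: Bv; apply: contra => vB; rewrite eq_sym eqEcard vB cardB cardv leqnn.
Qed.

Lemma val_e_set_le v B : v \in F -> B \in F -> val (e_set v) B <= n%:R.
Proof.
move=> vF BF; have [->|Bv] := eqVneq B v; first by rewrite val_e_set_self.
exact/ltW/val_e_set_lt.
Qed.

Lemma is_edge_lex (w1 w2 : 'I_n -> R) v u : v \in F -> u \in F -> v != u ->
  (forall B, B \in F -> val w1 B <= val w1 v) -> val w1 u = val w1 v ->
  (forall B, B \in F -> val w1 B = val w1 v -> val w2 B <= val w2 v) ->
  val w2 u = val w2 v ->
  (forall B, B \in F -> val w1 B = val w1 v -> val w2 B = val w2 v ->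
     B = v \/ B = u) ->
  @is_edge R n F v u.
Proof.
move=> vF uF vu w1_max w1u w2_max w2u w2_eq.
have [K lex] := exists_lex_weight (mem F) (fun B => val w1 B) (fun B => val w2 B) v.
have valW B : val (fun j => K * w1 j + w2 j) B = K * val w1 B + val w2 B.
  by rewrite dotvDl dotvZl.
have w1_cases B : B \in F -> val w1 B = val w1 v \/ val w1 B < val w1 v.
  by move/w1_max; rewrite le_eqVlt => /orP[/eqP|]; [left|right].
split=> //; exists (fun j => K * w1 j + w2 j); split=> [|B BF|B BF]; rewrite !valW.
- by rewrite w1u w2u.
- case: (w1_cases B BF) => [w1B|/(lex B BF)/ltW //].
  by rewrite w1B lerD2l w2_max.
- case: (w1_cases B BF) => [w1B|/(lex B BF) ltW eqW]; last by rewrite eqW ltxx in ltW.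
  by rewrite w1B => /addrI; apply: w2_eq.
Qed.

(* The vertex u0 of the face closest to v spans an edge with v: within the
   face, e_v + e_u0 is maximal exactly at v and u0. *)
Lemma face_is_edge w v u : v \in F -> u \in F -> u != v ->
  (forall B, B \in F -> val w B <= val w v) -> val w u = val w v ->
  exists2 u0, @is_edge R n F v u0 & val w u0 = val w v.
Proof.
move=> vF uF uv w_max wu.
pose face B := [&& B \in F, val w B == val w v & B != v].
have face_u : face u by rewrite /face uF wu eqxx uv.
case: (@arg_maxP _ R _ u face (fun B => val (e_set v) B) face_u).
move=> u0 /and3P[u0F /eqP wu0 u0v] u0_max; exists u0 => //.
have valW B : val (fun j => e_set v j + e_set u0 j) B =
    val (e_set v) B + val (e_set u0) B by rewrite dotvDl.
have vu0_sym : val (e_set u0) v = val (e_set v) u0 by rewrite dotvC.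
have u0_closest B : B \in F -> val w B = val w v -> B != v ->
    val (e_set v) B <= val (e_set v) u0.
  by move=> BF wB Bv; apply: u0_max; rewrite /face BF wB eqxx.
apply: (is_edge_lex (w2 := fun j => e_set v j + e_set u0 j) vF u0F _ w_max wu0).
- by rewrite eq_sym.
- move=> B BF wB; rewrite !valW val_e_set_self // vu0_sym.
  have [->|Bv] := eqVneq B v; first by rewrite val_e_set_self // vu0_sym addrC.
  have := u0_closest B BF wB Bv; have := val_e_set_le u0F BF; lra.
- by rewrite !valW !val_e_set_self // vu0_sym addrC.
- move=> B BF wB; rewrite !valW val_e_set_self // vu0_sym.
  have [->|Bv] := eqVneq B v; first by left.
  have [->|Bu0] := eqVneq B u0; first by right.
  move=> w2B; exfalso.
  have := u0_closest B BF wB Bv; have := val_e_set_lt u0F BF Bu0; lra.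
Qed.

(* rho is the steepest ratio of c-gain to e_v-loss over the vertices that
   improve c, so rho e_v + c is maximal at v and at the steepest ones. *)
Lemma exists_tilt c v u : v \in F -> u \in F -> val c v < val c u ->
  exists w, [/\ forall B, B \in F -> val w B <= val w v,
    exists u', [/\ u' \in F, u' != v & val w u' = val w v] &
    forall B, B \in F -> B != v -> val w B = val w v -> val c v < val c B].
Proof.
move=> vF uF cvu.
pose gap B := n%:R - val (e_set v) B.
pose gain B := val c B - val c v.
have gap_pos B : B \in F -> B != v -> 0 < gap B.
  by move=> BF Bv; rewrite subr_gt0 val_e_set_lt.
pose improving B := (B \in F) && (0 < gain B).
have improving_u : improving u by rewrite /improving uF subr_gt0.
case: (@arg_maxP _ R _ u improving (fun B => gain B / gap B) improving_u).
move=> um /andP[umF gain_um] um_max.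
have umv : um != v by apply: contraTneq gain_um => ->; rewrite /gain subrr ltxx.
set rho := gain um / gap um.
have rho_pos : 0 < rho by rewrite divr_gt0 ?gap_pos.
pose w j := rho * e_set v j + c j.
have valw B : val w B - val w v = gain B - rho * gap B.
  by rewrite !dotvDl !dotvZl val_e_set_self // /gain /gap; ring.
exists w; split.
- move=> B BF; rewrite -subr_le0 valw subr_le0.
  have [->|Bv] := eqVneq B v.
    by rewrite /gain /gap val_e_set_self // !subrr mulr0.
  have gapB := gap_pos B BF Bv.
  have [gainB|] := ltrP 0 (gain B); last by move/le_trans; apply; rewrite mulr_ge0 ?ltW.
  by rewrite -ler_pdivrMr //; apply: um_max; rewrite /improving BF gainB.
- exists um; split=> //; apply/eqP; rewrite -subr_eq0 valw /rho divfK ?subrr //.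
  by rewrite gt_eqF ?gap_pos.
- move=> B BF Bv /eqP; rewrite -subr_eq0 valw subr_eq0 => /eqP gainB.
  by rewrite -subr_gt0 -/(gain B) gainB mulr_gt0 ?gap_pos.
Qed.

Lemma improving_edge c v u : v \in F -> u \in F -> val c v < val c u ->
  exists2 u0, @is_edge R n F v u0 & val c v < val c u0.
Proof.
move=> vF uF cvu.
have [w [w_max [u' [u'F u'v wu']] w_improving]] := exists_tilt vF uF cvu.
have [u0 edge wu0] := face_is_edge vF u'F u'v w_max wu'.
exists u0 => //; have [_ u0F vu0 _] := edge.
by apply: w_improving; rewrite // eq_sym.
Qed.

End Edges.

Section Ranks.
Variables (n : nat) (F : {set {set elt n}}).
Implicit Types (S T B : {set elt n}).

Lemma rkM_max_basis S T B : T \subset S -> B \in F -> #|S :&: B| = rS F S ->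
  (forall B', B' \in F -> #|T :&: B'| <= #|T :&: B|)%N ->
  rkM F S T = #|T :&: B|.
Proof.
move=> TS BF SB_rank B_max.
have TSI B' : T :&: (S :&: B') = T :&: B' by rewrite setIA (setIidPl TS).
apply/eqP; rewrite eqn_leq; apply/andP; split.
  apply/bigmax_leqP => X /imsetP[B' + ->]; rewrite inE => /andP[B'F _].
  by rewrite TSI B_max.
rewrite -TSI; apply: (leq_bigmax_cond (F := fun X => #|T :&: X|)).
by apply/imsetP; exists B; rewrite // inE BF SB_rank eqxx.
Qed.

Lemma gD_max T B : (forall B', B' \in F -> admissible B' /\ #|B'| = n) ->
  B \in F -> (forall B', B' \in F -> #|T :&: B'| <= #|T :&: B|)%N ->
  gD F T = 2 * #|T :&: B|%:Z - #|T|%:Z.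
Proof.
move=> F_full BF B_max.
have termE B' : B' \in F ->
    #|T :&: B'|%:Z - #|barset T :&: B'|%:Z = 2 * #|T :&: B'|%:Z - #|T|%:Z.
  move=> /F_full[admB' cardB']; rewrite card_barsetI //.
  by have := subset_leq_card (subsetIl T B'); lia.
apply/le_anti/andP; split; last by rewrite -termE //; exact: le_bigmax_cond.
apply: bigmax_le => [|B' B'F].
  have := subset_leq_card (subsetIr (barset T) B).
  by rewrite -termE // (proj2 (F_full _ BF)); lia.
by rewrite termE // lerD2r ler_pM2l // lez_nat B_max.
Qed.

End Ranks.

Section DeltaMatroid.
Variables (R : realFieldType) (n : nat) (F : {set {set elt n}}) (S : {set elt n}).
Hypotheses (F_dm : @delta_matroid R n F) (admS : admissible S) (cardS : #|S| = n).
Implicit Types (T B u v : {set elt n}).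
Local Notation val w B := (dotv w (@e_set R n B)).

Lemma edge_subset_mono T v u : T \subset S -> @is_edge R n F v u ->
  val (e_set S) v < val (e_set S) u -> val (e_set T) v <= val (e_set T) u.
Proof.
move=> TS edge; have [_ _ /(_ _ _ edge) dir] := F_dm.
rewrite -subr_lt0 -subr_le0 -!dotvBr; apply: (good_direction_sign dir).
- by move=> j; rewrite (e_set_full _ _ admS cardS); case: ifP; [left|right].
- by move=> j; apply: e_set_subset.
Qed.

Lemma exists_basis_max T : T \subset S -> exists2 B, B \in F &
  #|S :&: B| = rS F S /\ forall B', B' \in F -> (#|T :&: B'| <= #|T :&: B|)%N.
Proof.
move=> TS; have [/set0Pn[B0 B0F] F_full _] := F_dm.
pose a B := #|T :&: B|; pose b B := #|S :&: B|.
case: (arg_maxnP a B0F) => Ba BaF Ba_max.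
pose top B := (B \in F) && (a B == a Ba).
have top_Ba : top Ba by apply/andP.
case: (arg_maxnP b top_Ba) => Bs /andP[BsF /eqP aBs] Bs_max.
exists Bs => //; split; last by move=> B' /Ba_max; rewrite -/(a Bs) aBs.
apply/eqP; rewrite eqn_leq leq_bigmax_cond //=; apply/bigmax_leqP => B BF.
rewrite leqNgt; apply/negP => bBs_lt.
have valS B' : B' \in F -> val (e_set S) B' = 2 * (b B')%:R - n%:R.
  by move=> /F_full[admB' cardB']; rewrite dotv_e_set_full // cardS.
have valT B' : B' \in F -> val (e_set T) B' = 2 * (a B')%:R - #|T|%:R.
  by move=> /F_full[admB' cardB']; rewrite dotv_e_set_full.
have S_improves : val (e_set S) Bs < val (e_set S) B.
  by rewrite !valS //; move: bBs_lt; rewrite -(ltr_nat R); lra.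
have [u edge Su] := improving_edge F_full BsF BF S_improves.
have [_ uF _ _] := edge.
have : (a Bs <= a u)%N.
  by have := edge_subset_mono TS edge Su; rewrite !valT // -(ler_nat R); lra.
rewrite aBs => aBa_le; have /Bs_max : top u.
  by rewrite /top uF eqn_leq aBa_le andbT; exact: Ba_max.
have : (b Bs < b u)%N by move: Su; rewrite !valS // -(ltr_nat R); lra.
by rewrite ltnNge => /negP.
Qed.

End DeltaMatroid.

Theorem proposition2p8 (R : realFieldType) (n : nat) (F : {set {set elt n}})
    (S : {set elt n}) :
  @delta_matroid R n F -> admissible S -> #|S| = n ->
  forall T : {set elt n}, T \subset S ->
    ((rkM F S T)%:R : rat) = ((gD F T)%:~R + (#|T|)%:R) / 2.
Proof.
move=> F_dm admS cardS T TS.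
have [B BF [SB_rank B_max]] := exists_basis_max F_dm admS cardS TS.
have [_ F_full _] := F_dm.
rewrite (rkM_max_basis TS BF SB_rank B_max) (gD_max F_full BF B_max).
by rewrite intrB intrM subrK mulrC mulKf.
Qed.
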